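(* Let $\mathcal{D}$ be any definition. There is an assignment of a positive integer level $\mathrm{lvl}(p)$ to every predicate $p$ occurring in $\mathcal{D}$ such that, whenever $\forall\vec x.\,p\,\vec x\stackrel{\triangle}{=}B\,p\,\vec x$ is a clause in $\mathcal{D}$, we have $|p\,\vec x| > |B\,X^p\,\vec x|$ for every parameter $X^p\in\mathcal{P}_p$.
   Context: Formulae of ${\rm Linc}^-$ are simply typed $\lambda$-terms of type $o$ in $\beta\eta$-long normal form given by $F ::= X^p\,\vec t \mid s = t \mid p\,\vec t \mid \bot\mid\top\mid F\land F\mid F\lor F\mid F\supset F\mid \forall x.F\mid\exists x.F$, where $p$ ranges over predicate constants and, for each $p$, $X^p$ ranges over a countably infinite set $\mathcal{P}_p$ of parameters of the same type as $p$. A definition is a finite set of clauses $\forall\vec x.\,p\,\vec x\stackrel{\triangle}{=}B\,p\,\vec x$ (each either inductive or co-inductive), where $B$ is a closed term containing no parameters and no free occurrence of $p$ (so $B\,p\,\vec x$ is the body with $p$ substituted); each predicate is the head of at most one clause; and definitions are non-mutually recursive: for distinct clauses with heads $p\ne q$ and bodies $B$ (for $p$) and $C$ (for $q$), if $p$ occurs in $C$ then $q$ does not occur in $B$. Given a level assignment $\mathrm{lvl}$ on predicates, the size $|F|$ of a formula is: $|X^p\,\vec t|=1$; $|p\,\vec t|=\mathrm{lvl}(p)$; $|\bot|=|\top|=|s=t|=1$; $|B\land C|=|B\lor C|=|B\supset C|=|B|+|C|+1$; $|\forall x.B\,x|=|\exists x.B\,x|=|B\,x|+1$.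
   Formalization: Non-mutual recursion means that for distinct predicates p ≠ q, if p occurs in C directly or through a chain of clause bodies, then q does not occur in B directly or through such a chain. The statement above fails without it. *)

From Stdlib Require Import List Relations.
Import ListNotations.

Inductive ty : Type :=
| TBase : nat -> ty
| TArr  : ty -> ty -> ty.

(* Terms (de Bruijn variables, constants, application).  Sizes of formulae
   do not depend on terms. *)
Inductive tm : Type :=
| tvar : nat -> tm
| tcst : nat -> tm
| tapp : tm -> tm -> tm
| tlam : ty -> tm -> tm.

(* Predicate constants are named by nat; the parameter X^p_i is the i-th
   parameter of the countably infinite set P_p. *)
Definition pred_const := nat.

(* Formulae: quantifiers bind de Bruijn variable 0 of the given type. *)
Inductive formula : Type :=
| FParam : pred_const -> nat -> list tm -> formula
| FEq    : tm -> tm -> formula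
| FPred  : pred_const -> list tm -> formula
| FBot   : formula
| FTop   : formula
| FAnd   : formula -> formula -> formula
| FOr    : formula -> formula -> formula
| FImp   : formula -> formula -> formula
| FAll   : ty -> formula -> formula
| FEx    : ty -> formula -> formula.

Fixpoint pred_occurs (q : pred_const) (F : formula) : Prop :=
  match F with
  | FPred p _ => p = q
  | FParam _ _ _ | FEq _ _ | FBot | FTop => False
  | FAnd A B | FOr A B | FImp A B => pred_occurs q A \/ pred_occurs q B
  | FAll _ A | FEx _ A => pred_occurs q A
  end.

Fixpoint param_free (F : formula) : Prop :=
  match F with
  | FParam _ _ _ => False
  | FEq _ _ | FPred _ _ | FBot | FTop => True
  | FAnd A B | FOr A B | FImp A B => param_free A /\ param_free B
  | FAll _ A | FEx _ A => param_free A
  end.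

(* F[p := X^p_i] : replace every occurrence of the predicate p by the
   parameter X^p_i (parameters bind nothing, so no shifting is needed). *)
Fixpoint subst_pred (p : pred_const) (i : nat) (F : formula) : formula :=
  match F with
  | FPred q ts => if Nat.eqb q p then FParam p i ts else FPred q ts
  | FParam _ _ _ | FEq _ _ | FBot | FTop => F
  | FAnd A B => FAnd (subst_pred p i A) (subst_pred p i B)
  | FOr A B => FOr (subst_pred p i A) (subst_pred p i B)
  | FImp A B => FImp (subst_pred p i A) (subst_pred p i B)
  | FAll T A => FAll T (subst_pred p i A)
  | FEx T A => FEx T (subst_pred p i A)
  end.

(* A clause  forall x1..xn. p x1..xn =^triangle B p x1..xn.
   [cl_body] is the formula B p x (the body with p substituted), whose free
   de Bruijn variables 0..n-1 stand for x1..xn and where the recursive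
   occurrences of p appear as FPred p _. *)
Record clause : Type := Clause {
  cl_head : pred_const;
  cl_coinductive : bool;      (* false = inductive, true = co-inductive *)
  cl_args : list ty;
  cl_body : formula
}.

Definition definition := list clause.

Definition dep_step (D : definition) (q p : pred_const) : Prop :=
  exists c, In c D /\ cl_head c = q /\ pred_occurs p (cl_body c).

Definition depends (D : definition) : pred_const -> pred_const -> Prop :=
  clos_trans pred_const (dep_step D).

Definition well_formed_definition (D : definition) : Prop :=
  (forall c, In c D -> param_free (cl_body c)) /\
  NoDup (map cl_head D) /\
  (forall p q, p <> q -> depends D q p -> ~ depends D p q).

Definition occurs_in_definition (D : definition) (p : pred_const) : Prop :=
  exists c, In c D /\ (cl_head c = p \/ pred_occurs p (cl_body c)).

Fixpoint fsize (lvl : pred_const -> nat) (F : formula) : nat :=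
  match F with
  | FParam _ _ _ => 1
  | FPred p _ => lvl p
  | FEq _ _ | FBot | FTop => 1
  | FAnd A B | FOr A B | FImp A B => fsize lvl A + fsize lvl B + 1
  | FAll _ A | FEx _ A => fsize lvl A + 1
  end.

Definition head_size (lvl : pred_const -> nat) (p : pred_const) (xs : list tm) : nat :=
  fsize lvl (FPred p xs).

(* Rank each predicate by the number of other predicates it depends on;
   non-mutual recursion makes the rank drop strictly along dependencies.
   Give [q] the level [B ^ (rank q + 1)], where [B] exceeds the number of
   nodes of every body.  Once the head of a clause is replaced by a
   parameter, every predicate left in the body has smaller rank, hence level
   at most [B ^ rank q], so the body has size at most
   [nodes * B ^ rank q < B ^ (rank q + 1)]. *)

From Stdlib Require Import List.
From Stdlib Require Import Lia Arith Relations ClassicalDescription.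
Import ListNotations.

Fixpoint preds (F : formula) : list pred_const :=
  match F with
  | FPred p _ => [p]
  | FParam _ _ _ | FEq _ _ | FBot | FTop => []
  | FAnd A B | FOr A B | FImp A B => preds A ++ preds B
  | FAll _ A | FEx _ A => preds A
  end.

Lemma pred_occurs_preds r F : pred_occurs r F -> In r (preds F).
Proof.
  induction F; simpl; intros Hr; try tauto; try (subst; left; reflexivity).
  all: apply in_or_app; tauto.
Qed.

Definition node_count (F : formula) : nat := fsize (fun _ => 1) F.

Lemma node_count_subst_pred p i F : node_count (subst_pred p i F) = node_count F.
Proof.
  unfold node_count; induction F; simpl; try lia.
  now destruct (Nat.eqb p0 p).
Qed.

Lemma pred_occurs_subst_pred p i r F :
  pred_occurs r (subst_pred p i F) -> r <> p /\ pred_occurs r F.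
Proof.
  induction F; simpl; try tauto.
  destruct (Nat.eqb p0 p) eqn:Ep; simpl; try tauto.
  intros ->. now apply Nat.eqb_neq in Ep.
Qed.

Lemma fsize_le_node_count lvl L F :
  1 <= L -> (forall r, pred_occurs r F -> lvl r <= L) ->
  fsize lvl F <= node_count F * L.
Proof.
  unfold node_count; intros HL; induction F; simpl; intros Hlvl; try nia.
  - specialize (Hlvl p eq_refl); lia.
  - specialize (IHF1 (fun r o => Hlvl r (or_introl o))).
    specialize (IHF2 (fun r o => Hlvl r (or_intror o))); nia.
  - specialize (IHF1 (fun r o => Hlvl r (or_introl o))).
    specialize (IHF2 (fun r o => Hlvl r (or_intror o))); nia.
  - specialize (IHF1 (fun r o => Hlvl r (or_introl o))).
    specialize (IHF2 (fun r o => Hlvl r (or_intror o))); nia.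
  - specialize (IHF Hlvl); nia.
  - specialize (IHF Hlvl); nia.
Qed.

Section Levels.

Variable D : definition.

Definition body_preds : list pred_const :=
  nodup Nat.eq_dec (flat_map (fun c => preds (cl_body c)) D).

Lemma depends_body_preds q r : depends D q r -> In r body_preds.
Proof.
  induction 1 as [x y [c [Hc [_ Hocc]]] | x y z _ _ _ IH]; auto.
  apply nodup_In, in_flat_map. exists c. auto using pred_occurs_preds.
Qed.

(* [depends D q] need not be decidable constructively, hence the classical
   filter. *)
Definition strict_deps (q : pred_const) : list pred_const :=
  filter (fun r => if excluded_middle_informative (r <> q /\ depends D q r)
                   then true else false) body_preds.

Lemma in_strict_deps q r : In r (strict_deps q) <-> r <> q /\ depends D q r.
Proof.
  unfold strict_deps; rewrite filter_In.
  destruct excluded_middle_informative as [H | H]; split; try tauto.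
  - intros [Hrq Hd]; split; [eapply depends_body_preds; eauto | reflexivity].
  - intros [_ Hf]; discriminate.
Qed.

Definition dep_rank (q : pred_const) : nat := length (strict_deps q).

Hypothesis non_mutual :
  forall p q, p <> q -> depends D q p -> ~ depends D p q.

Lemma dep_rank_lt q r : r <> q -> depends D q r -> dep_rank r < dep_rank q.
Proof.
  intros Hrq Hqr; unfold dep_rank.
  assert (Hr : In r (strict_deps q)) by (apply in_strict_deps; auto).
  assert (Hsub : incl (strict_deps r) (remove Nat.eq_dec r (strict_deps q))).
  { intros x Hx. apply in_strict_deps in Hx as [Hxr Hrx].
    apply in_in_remove; auto. apply in_strict_deps. split.
    - intros ->. exact (non_mutual r q Hrq Hqr Hrx).
    - eapply t_trans; eauto. }
  eapply Nat.le_lt_trans.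
  - apply (NoDup_incl_length (NoDup_filter _ (NoDup_nodup _ _)) Hsub).
  - apply remove_length_lt, Hr.
Qed.

Definition level_base : nat :=
  S (list_max (map (fun c => node_count (cl_body c)) D)).

Definition level (q : pred_const) : nat := level_base ^ (dep_rank q + 1).

Lemma node_count_lt_level_base c : In c D -> node_count (cl_body c) < level_base.
Proof.
  intros Hc; apply le_n_S.
  pose proof (proj1 (list_max_le (map (fun c => node_count (cl_body c)) D) _)
                (le_n _)) as Hmax.
  rewrite Forall_forall in Hmax; apply Hmax, in_map_iff; eauto.
Qed.

Lemma level_pos q : 0 < level q.
Proof. apply Nat.neq_0_lt_0, Nat.pow_nonzero; unfold level_base; lia. Qed.

Lemma level_clause_decreasing c i :
  In c D -> fsize level (subst_pred (cl_head c) i (cl_body c)) < level (cl_head c).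
Proof.
  intros Hc; set (L := level_base ^ dep_rank (cl_head c)).
  assert (HL : 1 <= L) by (apply Nat.neq_0_lt_0, Nat.pow_nonzero; unfold level_base; lia).
  assert (Hbody : fsize level (subst_pred (cl_head c) i (cl_body c))
                  <= node_count (cl_body c) * L).
  { rewrite <- (node_count_subst_pred (cl_head c) i).
    apply fsize_le_node_count; auto.
    intros r Hr; apply pred_occurs_subst_pred in Hr as [Hrq Hocc].
    unfold level, L; apply Nat.pow_le_mono_r; [unfold level_base; lia |].
    enough (dep_rank r < dep_rank (cl_head c)) by lia.
    apply dep_rank_lt; [exact Hrq | apply t_step; now exists c]. }
  pose proof (node_count_lt_level_base c Hc).
  assert (Hhead : level (cl_head c) = L * level_base)
    by (unfold level; rewrite Nat.pow_add_r, Nat.pow_1_r; reflexivity).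
  rewrite Hhead; nia.
Qed.

End Levels.

Theorem mainTheorem3 (D : definition) :
  well_formed_definition D ->
  exists lvl : pred_const -> nat,
    (forall p, occurs_in_definition D p -> 0 < lvl p) /\
    (forall c, In c D ->
       forall (xs : list tm) (i : nat),
         head_size lvl (cl_head c) xs > fsize lvl (subst_pred (cl_head c) i (cl_body c))).
Proof.
  intros [_ [_ non_mutual]].
  exists (level D); split.
  - intros p _; apply level_pos.
  - intros c Hc xs i; apply level_clause_decreasing; auto.
Qed.
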